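(* Let $G$ be a group generated by a finite set $S$. Assume that every subset of $S$ with (at most) $4$ elements generates a subgroup of exponent $3$. Then $G$ has exponent $3$. *)

From Stdlib Require Import List Arith.
Import ListNotations.

Record Group : Type := {
  carrier :> Type;
  gmul : carrier -> carrier -> carrier;
  gone : carrier;
  ginv : carrier -> carrier;
  gmul_assoc : forall x y z, gmul x (gmul y z) = gmul (gmul x y) z;
  gmul_1l : forall x, gmul gone x = x;
  gmul_1r : forall x, gmul x gone = x;
  gmul_Vl : forall x, gmul (ginv x) x = gone;
  gmul_Vr : forall x, gmul x (ginv x) = gone
}.

Arguments gmul {G} : rename.
Arguments gone {G} : rename.
Arguments ginv {G} : rename.

Inductive generated {G : Group} (A : G -> Prop) : G -> Prop :=
  | gen_base : forall x, A x -> generated A x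
  | gen_one : generated A gone
  | gen_mul : forall x y, generated A x -> generated A y -> generated A (gmul x y)
  | gen_inv : forall x, generated A x -> generated A (ginv x).

Definition cube {G : Group} (x : G) : G := gmul x (gmul x x).

Definition has_exponent3 {G : Group} (H : G -> Prop) : Prop :=
  forall x, H x -> cube x = gone.

(* In a group of exponent 3 every element commutes with its conjugates, so the
   normal closure of an element is abelian; linearising the resulting 2-Engel law
   [[u, g], g] = 1 there (an element whose square is 1 is trivial) shows that
   [[[x, a], b], c] = 1, i.e. class at most 3.  Applied to the subgroups generated
   by four generators, this makes the triple commutators of generators central,
   and induction over the generators spreads this to all of G: G has class at
   most 3, so triple commutators are central and multiplicative in each argument.  The
   2-Engel law [[a, b], a] = 1 and its polarisation [[a, b], c] [[c, b], a] = 1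
   hold on generators (by the 2- and 3-generator subgroups), hence everywhere by
   multilinearity.  Finally, with c = [b, a] commuting with a and b,
   (ab)^3 = a^3 b^3 c^3 and c^3 = 1 since bc = a^-1 b a, so cubing to 1 is closed
   under products. *)

From Stdlib Require Import List Arith Bool Lia.
Import ListNotations.

Section GroupFacts.
Variable G : Group.
Implicit Types a b c : G.

Lemma ginv_unique a b : gmul a b = gone -> b = ginv a.
Proof.
  intro H.
  rewrite <- (gmul_1l G b), <- (gmul_Vl G a), <- gmul_assoc, H, gmul_1r.
  reflexivity.
Qed.

Lemma ginv_involutive a : ginv (ginv a) = a.
Proof. symmetry. apply ginv_unique, gmul_Vl. Qed.

Lemma ginv_gmul a b : ginv (gmul a b) = gmul (ginv b) (ginv a).
Proof.
  symmetry. apply ginv_unique.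
  rewrite gmul_assoc, <- (gmul_assoc G a b), gmul_Vr, gmul_1r, gmul_Vr.
  reflexivity.
Qed.

Lemma ginv_gone : ginv (@gone G) = gone.
Proof. symmetry. apply ginv_unique, gmul_1l. Qed.

Definition commute (a b : G) : Prop := gmul a b = gmul b a.
Definition central (a : G) : Prop := forall g, commute a g.

Lemma commute_sym a b : commute a b -> commute b a.
Proof. unfold commute; auto. Qed.

Lemma commute_refl a : commute a a.
Proof. reflexivity. Qed.

Lemma commute_gone_r a : commute a gone.
Proof. unfold commute; rewrite gmul_1l, gmul_1r; reflexivity. Qed.

Lemma commute_gmul_r a b c : commute a b -> commute a c -> commute a (gmul b c).
Proof.
  unfold commute; intros Hb Hc.
  rewrite gmul_assoc, Hb, <- gmul_assoc, Hc, gmul_assoc; reflexivity.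
Qed.

Lemma commute_ginv_r a b : commute a b -> commute a (ginv b).
Proof.
  unfold commute; intro H.
  transitivity (gmul (ginv b) (gmul (gmul b a) (ginv b))).
  - rewrite !gmul_assoc, gmul_Vl, gmul_1l; reflexivity.
  - rewrite <- H, <- !gmul_assoc, gmul_Vr, gmul_1r; reflexivity.
Qed.

Lemma commute_gmul_l a b c : commute a c -> commute b c -> commute (gmul a b) c.
Proof. intros. apply commute_sym, commute_gmul_r; apply commute_sym; assumption. Qed.

Lemma commute_ginv_l a b : commute a b -> commute (ginv a) b.
Proof. intro. apply commute_sym, commute_ginv_r, commute_sym; assumption. Qed.

Lemma central_gone : central (@gone G).
Proof. intro g. apply commute_sym, commute_gone_r. Qed.

Lemma central_gmul a b : central a -> central b -> central (gmul a b).
Proof. intros Ha Hb g. apply commute_gmul_l; auto. Qed.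

Lemma central_ginv a : central a -> central (ginv a).
Proof. intros Ha g. apply commute_ginv_l; auto. Qed.

End GroupFacts.

Arguments commute {G}.
Arguments central {G}.

Inductive gexp := GAtom (n : nat) | GMul (a b : gexp) | GInv (a : gexp) | GOne.

Fixpoint geval {G : Group} (env : list G) (e : gexp) : G :=
  match e with
  | GAtom n => nth n env gone
  | GMul a b => gmul (geval env a) (geval env b)
  | GInv a => ginv (geval env a)
  | GOne => gone
  end.

(* A letter [(n, true)] stands for the inverse of atom [n]. *)
Definition letter := (nat * bool)%type.

Definition lval {G : Group} (env : list G) (l : letter) : G :=
  if snd l then ginv (nth (fst l) env gone) else nth (fst l) env gone.

Fixpoint wval {G : Group} (env : list G) (w : list letter) : G :=
  match w with [] => gone | l :: w' => gmul (lval env l) (wval env w') end.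

Definition flip_letter (l : letter) : letter := (fst l, negb (snd l)).

Fixpoint flatten (e : gexp) : list letter :=
  match e with
  | GAtom n => [(n, false)]
  | GMul a b => flatten a ++ flatten b
  | GInv a => map flip_letter (rev (flatten a))
  | GOne => []
  end.

Definition inverse_letters (l1 l2 : letter) : bool :=
  Nat.eqb (fst l1) (fst l2) && xorb (snd l1) (snd l2).

Fixpoint reduce_word_onto (stack w : list letter) : list letter :=
  match w, stack with
  | [], _ => rev stack
  | l :: w', s :: stack' =>
      if inverse_letters s l then reduce_word_onto stack' w'
      else reduce_word_onto (l :: stack) w'
  | l :: w', [] => reduce_word_onto [l] w'
  end.

Definition reduce_word (w : list letter) : list letter := reduce_word_onto [] w.

Definition letter_ltb (l1 l2 : letter) : bool :=
  Nat.ltb (fst l1) (fst l2) ||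
  (Nat.eqb (fst l1) (fst l2) && (snd l1 && negb (snd l2))).

Fixpoint insert_letter (l : letter) (w : list letter) : list letter :=
  match w with
  | [] => [l]
  | m :: w' => if letter_ltb m l then m :: insert_letter l w' else l :: w
  end.

Fixpoint sort_letters (w : list letter) : list letter :=
  match w with [] => [] | l :: w' => insert_letter l (sort_letters w') end.

Definition in_atoms (cs : list nat) (l : letter) : bool := existsb (Nat.eqb (fst l)) cs.

(* The letters whose atoms are listed in [cs] commute with everything: they are
   moved to the front and sorted, so that they can cancel. *)
Definition normal_form (cs : list nat) (w : list letter) : list letter :=
  reduce_word (sort_letters (filter (in_atoms cs) w)) ++
  reduce_word (filter (fun l => negb (in_atoms cs l)) w).

Section NormalFormSound.
Variable G : Group.
Variable env : list G.

Lemma wval_app w1 w2 : wval env (w1 ++ w2) = gmul (wval env w1) (wval env w2).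
Proof.
  induction w1 as [|l w1 IH]; simpl.
  - rewrite gmul_1l; reflexivity.
  - rewrite IH, gmul_assoc; reflexivity.
Qed.

Lemma lval_flip_letter l : lval env (flip_letter l) = ginv (lval env l).
Proof.
  destruct l as [n []]; unfold lval, flip_letter; simpl;
    [rewrite ginv_involutive|]; reflexivity.
Qed.

Lemma wval_flip_letter_rev w : wval env (map flip_letter (rev w)) = ginv (wval env w).
Proof.
  induction w as [|l w IH]; simpl.
  - rewrite ginv_gone; reflexivity.
  - rewrite map_app, wval_app, IH, ginv_gmul; simpl.
    rewrite lval_flip_letter, gmul_1r; reflexivity.
Qed.

Lemma wval_flatten e : wval env (flatten e) = geval env e.
Proof.
  induction e; simpl.
  - apply gmul_1r.
  - rewrite wval_app, IHe1, IHe2; reflexivity.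
  - rewrite wval_flip_letter_rev, IHe; reflexivity.
  - reflexivity.
Qed.

Lemma inverse_letters_cancel s l :
  inverse_letters s l = true -> gmul (lval env s) (lval env l) = gone.
Proof.
  destruct s as [n []], l as [m []]; unfold inverse_letters, lval; simpl;
    rewrite ?andb_false_r; try discriminate;
    rewrite andb_true_r; intro E; apply Nat.eqb_eq in E; subst m.
  - apply gmul_Vl.
  - apply gmul_Vr.
Qed.

Lemma wval_reduce_word_onto stack w :
  wval env (reduce_word_onto stack w) = wval env (rev stack ++ w).
Proof.
  revert stack; induction w as [|l w IH]; intros [|s stack]; simpl;
    rewrite ?app_nil_r; try reflexivity.
  - apply IH.
  - destruct (inverse_letters s l) eqn:E; rewrite IH; simpl; rewrite <- app_assoc;
      [|reflexivity].
    rewrite !wval_app; simpl.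
    f_equal. rewrite gmul_1r, gmul_assoc, (inverse_letters_cancel _ _ E), gmul_1l.
    reflexivity.
Qed.

Lemma wval_reduce_word w : wval env (reduce_word w) = wval env w.
Proof. apply wval_reduce_word_onto. Qed.

Variable cs : list nat.
Hypothesis cs_commute :
  Forall (fun n => Forall (fun b => commute (nth n env gone) b) env) cs.

Lemma in_atoms_commute l m :
  in_atoms cs l = true -> commute (lval env l) (lval env m).
Proof.
  intro H. apply existsb_exists in H as [n [Hn E]]. apply Nat.eqb_eq in E.
  rewrite Forall_forall in cs_commute.
  assert (Hnm : commute (nth n env gone) (nth (fst m) env gone)).
  { destruct (Nat.lt_ge_cases (fst m) (length env)) as [Hlt|Hge].
    - specialize (cs_commute n Hn). rewrite Forall_forall in cs_commute.
      apply cs_commute, nth_In, Hlt.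
    - rewrite (nth_overflow env gone Hge). apply commute_gone_r. }
  destruct l as [a []], m as [b []]; unfold lval; simpl in *; subst n;
    auto using commute_ginv_l, commute_ginv_r.
Qed.

Lemma wval_commute w l : (forall m, In m w -> commute (lval env m) (lval env l)) ->
  commute (wval env w) (lval env l).
Proof.
  induction w as [|m w IH]; simpl; intro H.
  - apply commute_sym, commute_gone_r.
  - apply commute_gmul_l; auto.
Qed.

Lemma wval_filter w : wval env w =
  gmul (wval env (filter (in_atoms cs) w))
       (wval env (filter (fun l => negb (in_atoms cs l)) w)).
Proof.
  induction w as [|l w IH]; simpl.
  - rewrite gmul_1l; reflexivity.
  - destruct (in_atoms cs l) eqn:E; simpl; rewrite IH, ?gmul_assoc; [reflexivity|].
    f_equal. symmetry. apply wval_commute. intros m Hm.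
    apply filter_In in Hm as [_ Hm]. apply in_atoms_commute, Hm.
Qed.

Lemma wval_insert_letter l w : (forall m, In m (l :: w) -> in_atoms cs m = true) ->
  wval env (insert_letter l w) = gmul (lval env l) (wval env w).
Proof.
  induction w as [|m w IH]; simpl; intro H; [reflexivity|].
  destruct (letter_ltb m l); simpl; [|reflexivity].
  rewrite IH by (intros k [<-|Hk]; apply H; simpl; auto).
  rewrite !gmul_assoc. f_equal. apply in_atoms_commute, H. simpl; auto.
Qed.

Lemma in_insert_letter l w m : In m (insert_letter l w) -> m = l \/ In m w.
Proof.
  induction w as [|k w IH]; simpl; [intuition|].
  destruct (letter_ltb k l); simpl; intuition.
Qed.

Lemma in_sort_letters w m : In m (sort_letters w) -> In m w.
Proof.
  induction w as [|l w IH]; simpl; [tauto|].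
  intros H. apply in_insert_letter in H. intuition.
Qed.

Lemma wval_sort_letters w : (forall m, In m w -> in_atoms cs m = true) ->
  wval env (sort_letters w) = wval env w.
Proof.
  induction w as [|l w IH]; simpl; intro H; [reflexivity|].
  rewrite wval_insert_letter, IH; auto.
  intros m [<-|Hm]; auto using in_sort_letters.
Qed.

Lemma wval_normal_form w : wval env (normal_form cs w) = wval env w.
Proof.
  unfold normal_form.
  rewrite wval_app, !wval_reduce_word, wval_sort_letters, <- wval_filter;
    [reflexivity|].
  intros m Hm. apply filter_In in Hm; tauto.
Qed.

Theorem normal_form_sound e1 e2 :
  normal_form cs (flatten e1) = normal_form cs (flatten e2) -> geval env e1 = geval env e2.
Proof.
  intro H.
  rewrite <- !wval_flatten, <- (wval_normal_form (flatten e1)), H, wval_normal_form.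
  reflexivity.
Qed.

End NormalFormSound.

Ltac mem x l :=
  lazymatch l with
  | nil => constr:(false)
  | cons x _ => constr:(true)
  | cons _ ?l' => mem x l'
  end.

Ltac index x l :=
  lazymatch l with
  | cons x _ => constr:(0)
  | cons _ ?l' => let n := index x l' in constr:(S n)
  end.

Ltac add_atoms t l :=
  lazymatch t with
  | gmul ?a ?b => let l1 := add_atoms a l in add_atoms b l1
  | ginv ?a => add_atoms a l
  | gone => l
  | _ => lazymatch mem t l with true => l | false => constr:(cons t l) end
  end.

Ltac reify t l :=
  lazymatch t with
  | gmul ?a ?b => let ea := reify a l in let eb := reify b l in constr:(GMul ea eb)
  | ginv ?a => let ea := reify a l in constr:(GInv ea)
  | gone => constr:(GOne)
  | _ => let n := index t l in constr:(GAtom n)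
  end.

Ltac goal_atoms :=
  lazymatch goal with
  | |- @eq (carrier ?G) ?lhs ?rhs =>
      let l := add_atoms lhs (@nil (carrier G)) in add_atoms rhs l
  end.

Ltac indices_in l cl i :=
  lazymatch l with
  | nil => constr:(@nil nat)
  | cons ?a ?l' =>
      let r := indices_in l' cl (S i) in
      lazymatch mem a cl with true => constr:(cons i r) | false => r end
  end.

(* Proves an equation of group words, treating the atoms in [cl] as commuting
   with all other atoms; [tac] must discharge those commutations. *)
Ltac group_eq_with cl tac :=
  let l := goal_atoms in
  lazymatch goal with
  | |- @eq (carrier ?G) ?lhs ?rhs =>
      let e1 := reify lhs l in
      let e2 := reify rhs l in
      let cs := indices_in l cl 0 in
      change (geval l e1 = geval l e2);
      apply (normal_form_sound G l cs);
      [ repeat first [apply Forall_nil | apply Forall_cons]; cbn [nth]; tac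
      | vm_compute; reflexivity ]
  end.

Ltac central_atoms l :=
  lazymatch l with
  | nil => l
  | cons ?a ?l' =>
      let r := central_atoms l' in
      lazymatch goal with
      | _ : central a |- _ => constr:(cons a r)
      | _ => r
      end
  end.

(* [idtac;] delays the [match goal] until the tactic is run on a side goal. *)
Ltac apply_central := idtac; match goal with H : central ?a |- commute ?a _ => apply H end.

Ltac group_eq :=
  let l := goal_atoms in let cl := central_atoms l in group_eq_with cl apply_central.

Ltac abel_eq tac := let l := goal_atoms in group_eq_with l tac.

Definition conj {G : Group} (u g : G) : G := gmul (ginv g) (gmul u g).
Definition comm {G : Group} (u g : G) : G := gmul (ginv u) (gmul (ginv g) (gmul u g)).

Section Commutators.
Variable G : Group.
Implicit Types a b g h p q : G.

Lemma commute_comm_gone a b : commute a b -> comm a b = gone.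
Proof. unfold comm, commute; intro H. rewrite H. group_eq. Qed.

Lemma comm_gone_commute a b : comm a b = gone -> commute a b.
Proof.
  unfold commute; intro H.
  transitivity (gmul (gmul b a) (comm a b)); [unfold comm; group_eq|].
  rewrite H; group_eq.
Qed.

Lemma conj_commute a b : commute a b -> conj a b = a.
Proof. unfold conj, commute; intro H. rewrite H. group_eq. Qed.

Lemma conj_central a g : central a -> conj a g = a.
Proof. intros Ha. apply conj_commute, Ha. Qed.

Lemma conj_comm p g : conj p g = gmul p (comm p g).
Proof. unfold comm, conj; group_eq. Qed.

Lemma comm_gone_l g : comm gone g = gone.
Proof. unfold comm; group_eq. Qed.

Lemma comm_gone_r p : comm p gone = gone.
Proof. unfold comm; group_eq. Qed.

Lemma comm_gmul_l p q g : comm (gmul p q) g = gmul (conj (comm p g) q) (comm q g).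
Proof. unfold comm, conj; group_eq. Qed.

Lemma comm_gmul_r p g h : comm p (gmul g h) = gmul (comm p h) (conj (comm p g) h).
Proof. unfold comm, conj; group_eq. Qed.

Lemma comm_ginv_l p g : comm (ginv p) g = conj (ginv (comm p g)) (ginv p).
Proof. unfold comm, conj; group_eq. Qed.

Lemma comm_ginv_r p g : comm p (ginv g) = conj (ginv (comm p g)) (ginv g).
Proof. unfold comm, conj; group_eq. Qed.

Lemma cube_conj a g : cube (conj a g) = conj (cube a) g.
Proof. unfold cube, conj; group_eq. Qed.

Lemma cube_ginv a : cube (ginv a) = ginv (cube a).
Proof. unfold cube; group_eq. Qed.

Lemma cube_gmul_commute a b : commute a b -> cube (gmul a b) = gmul (cube a) (cube b).
Proof.
  intro H. unfold cube.
  group_eq_with (cons b nil) ltac:(first [apply commute_sym, H | apply commute_refl]).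
Qed.

Lemma cube_gmul_comm a b : commute (comm b a) a -> commute (comm b a) b ->
  cube (gmul a b) = gmul (cube a) (gmul (cube b) (cube (comm b a))).
Proof.
  intros Ha Hb. set (c := comm b a) in *.
  assert (E : gmul b a = gmul a (gmul b c)) by (unfold c, comm; group_eq).
  clearbody c.
  transitivity (gmul a (gmul (gmul b a) (gmul (gmul b a) b))); [unfold cube; group_eq|].
  rewrite E.
  transitivity (gmul c (gmul c (gmul a (gmul a (gmul (gmul b a) (gmul b b))))));
    [group_eq_with (cons c nil) ltac:(first [assumption | apply commute_refl])|].
  rewrite E. unfold cube.
  group_eq_with (cons c nil) ltac:(first [assumption | apply commute_refl]).
Qed.

End Commutators.

Section ExponentThree.
Variable G : Group.
Variable L : G -> Prop.
Hypothesis L_one : L gone.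
Hypothesis L_mul : forall a b, L a -> L b -> L (gmul a b).
Hypothesis L_inv : forall a, L a -> L (ginv a).
Hypothesis L_cube : forall u, L u -> cube u = gone.
Implicit Types u v g h k : G.

Lemma L_conj u g : L u -> L g -> L (conj u g).
Proof. intros; unfold conj; auto. Qed.

Lemma L_comm u g : L u -> L g -> L (comm u g).
Proof. intros; unfold comm; auto. Qed.

(* From (u g^-1)^3 = g^3 = (u g)^3 = 1. *)
Lemma commute_conj_self u g : L u -> L g -> commute u (conj u g).
Proof.
  intros Lu Lg.
  assert (E1 : cube (gmul u (ginv g)) = gone) by auto.
  assert (E2 : cube (gmul u g) = gone) by auto.
  assert (E3 : cube g = gone) by auto.
  unfold commute, conj.
  transitivity (gmul g (gmul (ginv u) (ginv g))).
  - transitivity (gmul (cube (gmul u (ginv g)))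
                   (gmul g (gmul (ginv u) (gmul (ginv g) (cube g))))).
    + unfold cube; group_eq.
    + rewrite E1, E3; group_eq.
  - transitivity (gmul (ginv (cube g)) (gmul g (gmul g (gmul (cube (gmul u g))
                   (gmul (ginv g) (gmul (ginv u) (ginv g))))))).
    + rewrite E2, E3, ginv_gone; group_eq.
    + unfold cube; group_eq.
Qed.

Lemma commute_comm_l u g : L u -> L g -> commute (comm u g) u.
Proof.
  intros Lu Lg.
  replace (comm u g) with (gmul (ginv u) (conj u g)) by (unfold comm, conj; group_eq).
  apply commute_gmul_l.
  - apply commute_ginv_l, commute_refl.
  - apply commute_sym, commute_conj_self; assumption.
Qed.

Lemma commute_comm_r u g : L u -> L g -> commute (comm u g) g.
Proof.
  intros Lu Lg.
  replace (comm u g) with (gmul (ginv (conj g u)) g) by (unfold comm, conj; group_eq).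
  apply commute_gmul_l.
  - apply commute_ginv_l, commute_sym, commute_conj_self; assumption.
  - apply commute_refl.
Qed.

Lemma comm_comm_self_r u g : L u -> L g -> comm (comm u g) g = gone.
Proof. intros; apply commute_comm_gone, commute_comm_r; assumption. Qed.

Lemma comm_ginv_r_L u g : L u -> L g -> comm u (ginv g) = ginv (comm u g).
Proof.
  intros Lu Lg.
  rewrite comm_ginv_r. apply conj_commute.
  apply commute_ginv_l, commute_ginv_r, commute_comm_r; assumption.
Qed.

Lemma square_trivial k : L k -> gmul k k = gone -> k = gone.
Proof.
  intros Lk H. transitivity (gmul (cube k) (ginv (gmul k k))).
  - unfold cube; group_eq.
  - rewrite H, L_cube by assumption. group_eq.
Qed.

Variable x : G.
Hypothesis Lx : L x.

Local Notation nclosure := (generated (fun v => exists g, L g /\ v = conj x g)).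

Lemma nclosure_x : nclosure x.
Proof. apply gen_base. exists gone. split; [assumption|]. unfold conj; group_eq. Qed.

Lemma nclosure_L v : nclosure v -> L v.
Proof. induction 1 as [v [g [Lg ->]]| | |]; auto using L_conj. Qed.

Lemma commute_conj_x g h : L g -> L h -> commute (conj x g) (conj x h).
Proof.
  intros Lg Lh.
  replace (conj x h) with (conj (conj x g) (gmul (ginv g) h)) by (unfold conj; group_eq).
  apply commute_conj_self; auto using L_conj.
Qed.

Lemma nclosure_commute a b : nclosure a -> nclosure b -> commute a b.
Proof.
  intros Ha. revert b.
  induction Ha as [a [g [Lg ->]]| | |]; intros b Hb.
  - induction Hb as [b [h [Lh ->]]| | |];
      auto using commute_conj_x, commute_gone_r, commute_gmul_r, commute_ginv_r.
  - apply commute_sym, commute_gone_r.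
  - apply commute_gmul_l; auto.
  - apply commute_ginv_l; auto.
Qed.

Lemma nclosure_conj v g : nclosure v -> L g -> nclosure (conj v g).
Proof.
  intros Hv Lg. induction Hv as [v [h [Lh ->]]| | a b _ IHa _ IHb | a _ IHa].
  - apply gen_base. exists (gmul h g). split; auto. unfold conj; group_eq.
  - replace (conj gone g) with (@gone G) by (unfold conj; group_eq). apply gen_one.
  - replace (conj (gmul a b) g) with (gmul (conj a g) (conj b g))
      by (unfold conj; group_eq).
    apply gen_mul; assumption.
  - replace (conj (ginv a) g) with (ginv (conj a g)) by (unfold conj; group_eq).
    apply gen_inv; assumption.
Qed.

Lemma nclosure_comm v g : nclosure v -> L g -> nclosure (comm v g).
Proof.
  intros Hv Lg.
  replace (comm v g) with (gmul (ginv v) (conj v g)) by (unfold comm, conj; group_eq).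
  apply gen_mul; [apply gen_inv|apply nclosure_conj]; assumption.
Qed.

#[local] Hint Resolve nclosure_comm nclosure_L nclosure_x : nclosure.
#[local] Hint Resolve L_comm L_mul L_inv L_one gen_mul gen_inv : nclosure.

Lemma comm_gmul_l_nclosure u v g : nclosure u -> nclosure v -> L g ->
  comm (gmul u v) g = gmul (comm u g) (comm v g).
Proof.
  intros Hu Hv Lg.
  rewrite comm_gmul_l, conj_commute; [reflexivity|].
  apply nclosure_commute; auto with nclosure.
Qed.

Lemma comm_ginv_l_nclosure u g : nclosure u -> L g -> comm (ginv u) g = ginv (comm u g).
Proof.
  intros Hu Lg. apply ginv_unique.
  rewrite <- comm_gmul_l_nclosure, gmul_Vr by auto with nclosure. apply comm_gone_l.
Qed.

Ltac expand_comm H :=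
  repeat first
    [ rewrite comm_gmul_r, conj_comm in H
    | rewrite comm_gmul_l_nclosure in H by auto with nclosure
    | rewrite comm_ginv_r_L in H by auto with nclosure
    | rewrite comm_ginv_l_nclosure in H by auto with nclosure
    | rewrite comm_comm_self_r in H by auto with nclosure
    | rewrite comm_gone_l, ?ginv_involutive, ?ginv_gone, ?gmul_1l, ?gmul_1r in H ].

Ltac lhs_of H := match type of H with ?e = _ => e end.

Ltac nclosure_abel_eq := abel_eq ltac:(apply nclosure_commute; auto with nclosure).

Lemma comm2_polarized v g h : nclosure v -> L g -> L h ->
  gmul (comm (comm v g) h) (gmul (comm (comm v h) g) (comm (comm (comm v g) h) g)) = gone.
Proof.
  intros Hv Lg Lh.
  assert (H1 : comm (comm v (gmul g h)) (gmul g h) = gone)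
    by (apply comm_comm_self_r; auto with nclosure).
  assert (H2 : comm (comm v (gmul g (ginv h))) (gmul g (ginv h)) = gone)
    by (apply comm_comm_self_r; auto with nclosure).
  expand_comm H1. expand_comm H2.
  (* In the abelian normal closure, H1 / H2 is the square of the left-hand side. *)
  apply square_trivial; [auto 10 with nclosure|].
  let e1 := lhs_of H1 in let e2 := lhs_of H2 in
  transitivity (gmul e1 (ginv e2)).
  - nclosure_abel_eq.
  - rewrite H1, H2. group_eq.
Qed.

Lemma comm3_repeat_trivial v g h : nclosure v -> L g -> L h ->
  comm (comm (comm v g) h) g = gone.
Proof.
  intros Hv Lg Lh.
  pose proof (comm2_polarized (comm v g) g h) as H. expand_comm H.
  apply H; auto with nclosure.
Qed.

Lemma comm2_antisymmetric v g h : nclosure v -> L g -> L h ->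
  gmul (comm (comm v g) h) (comm (comm v h) g) = gone.
Proof.
  intros Hv Lg Lh.
  pose proof (comm2_polarized v g h Hv Lg Lh) as H.
  rewrite comm3_repeat_trivial, gmul_1r in H; assumption.
Qed.

Lemma comm3_nclosure_trivial v g h k : nclosure v -> L g -> L h -> L k ->
  comm (comm (comm v g) h) k = gone.
Proof.
  intros Hv Lg Lh Lk.
  pose proof (comm2_antisymmetric v (gmul g h) k Hv ltac:(auto) Lk) as H.
  pose proof (comm2_antisymmetric v h k Hv Lh Lk) as Ehk.
  pose proof (comm2_antisymmetric (comm v g) h k ltac:(auto with nclosure) Lh Lk) as Eghk.
  assert (Ekg : comm (comm v k) g = ginv (comm (comm v g) k))
    by (apply ginv_unique, comm2_antisymmetric; assumption).
  expand_comm H. rewrite Ekg in H. expand_comm H.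
  apply square_trivial; [auto 10 with nclosure|].
  let e := lhs_of H in let e2 := lhs_of Ehk in let e3 := lhs_of Eghk in
  transitivity (gmul e (gmul (ginv e2) e3)).
  - nclosure_abel_eq.
  - rewrite H, Ehk, Eghk. group_eq.
Qed.

End ExponentThree.

Theorem exponent3_class3 (G : Group) (L : G -> Prop) (L_one : L gone)
  (L_mul : forall a b, L a -> L b -> L (gmul a b))
  (L_inv : forall a, L a -> L (ginv a))
  (L_cube : forall u, L u -> cube u = gone) (x a b c : G) :
  L x -> L a -> L b -> L c -> comm (comm (comm x a) b) c = gone.
Proof.
  intros Lx La Lb Lc.
  apply (comm3_nclosure_trivial G L L_one L_mul L_inv L_cube x Lx); auto.
  apply nclosure_x; assumption.
Qed.

Section Generated.
Variable G : Group.
Variable S : list G.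
Hypothesis S_generates : forall g : G, generated (fun x => In x S) g.
Hypothesis S_small_exponent3 : forall T : list G, incl T S -> length T <= 4 ->
  has_exponent3 (generated (fun x => In x T)).
Implicit Types a b c g h p q x y z : G.

Lemma generators_ind (P : G -> Prop) : P gone ->
  (forall a b, P a -> P b -> P (gmul a b)) -> (forall a, P a -> P (ginv a)) ->
  (forall s, In s S -> P s) -> forall g, P g.
Proof. intros P1 Pmul Pinv PS g. induction (S_generates g); auto. Qed.

Lemma hom_trivial_on_generators (phi : G -> G) :
  (forall a b, phi (gmul a b) = gmul (phi a) (phi b)) ->
  (forall s, In s S -> phi s = gone) -> forall g, phi g = gone.
Proof.
  intros phi_mul phiS.
  assert (phi1 : phi gone = gone).
  { transitivity (gmul (phi gone) (gmul (phi gone) (ginv (phi gone)))).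
    - rewrite gmul_Vr, gmul_1r; reflexivity.
    - rewrite gmul_assoc, <- phi_mul, gmul_1l, gmul_Vr; reflexivity. }
  apply generators_ind; auto.
  - intros a b Ha Hb. rewrite phi_mul, Ha, Hb. apply gmul_1l.
  - intros a Ha. transitivity (gmul (phi (ginv a)) (phi a)).
    + rewrite Ha, gmul_1r; reflexivity.
    + rewrite <- phi_mul, gmul_Vl; assumption.
Qed.

Lemma small_subset_class3 T x a b c : incl T S -> length T <= 4 ->
  In x T -> In a T -> In b T -> In c T -> comm (comm (comm x a) b) c = gone.
Proof.
  intros HT HL Hx Ha Hb Hc.
  apply (exponent3_class3 G _ (gen_one _) (gen_mul _) (gen_inv _)
           (S_small_exponent3 T HT HL));
    apply gen_base; assumption.
Qed.

Lemma small_subset_engel2 T x z : incl T S -> length T <= 4 ->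
  generated (fun w => In w T) x -> generated (fun w => In w T) z ->
  comm (comm x z) x = gone.
Proof.
  intros HT HL Hx Hz. apply commute_comm_gone.
  apply (commute_comm_l G _ (gen_mul _) (gen_inv _) (S_small_exponent3 T HT HL));
    assumption.
Qed.

Ltac incl_S := unfold incl; simpl; intuition (subst; auto).

Lemma central_comm3_generators x y z : In x S -> In y S -> In z S ->
  central (comm (comm x y) z).
Proof.
  intros Hx Hy Hz. unfold central. apply generators_ind.
  - apply commute_gone_r.
  - intros; apply commute_gmul_r; assumption.
  - intros; apply commute_ginv_r; assumption.
  - intros w Hw. apply comm_gone_commute.
    apply (small_subset_class3 [x; y; z; w]); simpl; auto. incl_S.
Qed.

Lemma central_comm_comm_generators x y : In x S -> In y S ->
  forall c, central (comm (comm x y) c).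
Proof.
  intros Hx Hy. apply generators_ind.
  - rewrite comm_gone_r. apply central_gone.
  - intros a b Ha Hb. rewrite comm_gmul_r, conj_central by assumption.
    apply central_gmul; assumption.
  - intros a Ha. rewrite comm_ginv_r, conj_central by (apply central_ginv; assumption).
    apply central_ginv; assumption.
  - intros; apply central_comm3_generators; assumption.
Qed.

Definition center2 (p : G) : Prop := forall c, central (comm p c).

Lemma center2_central z : central z -> center2 z.
Proof. intros Hz c. rewrite commute_comm_gone by apply Hz. apply central_gone. Qed.

Lemma center2_gmul p q : center2 p -> center2 q -> center2 (gmul p q).
Proof.
  intros Hp Hq c. rewrite comm_gmul_l, conj_central by apply Hp.
  apply central_gmul; auto.
Qed.

Lemma center2_ginv p : center2 p -> center2 (ginv p).
Proof.
  intros Hp c. rewrite comm_ginv_l, conj_central by (apply central_ginv, Hp).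
  apply central_ginv; auto.
Qed.

Lemma center2_conj p g : center2 p -> center2 (conj p g).
Proof.
  intros Hp. rewrite conj_comm. apply center2_gmul, center2_central; auto.
Qed.

Lemma center2_comm_generator x : In x S -> forall b, center2 (comm x b).
Proof.
  intros Hx. apply generators_ind.
  - rewrite comm_gone_r. apply center2_central, central_gone.
  - intros a b Ha Hb. rewrite comm_gmul_r. apply center2_gmul, center2_conj; assumption.
  - intros a Ha. rewrite comm_ginv_r. apply center2_conj, center2_ginv; assumption.
  - intros y Hy c. apply central_comm_comm_generators; assumption.
Qed.

Lemma center2_comm a b : center2 (comm a b).
Proof.
  revert a b.
  apply (generators_ind (fun a => forall b, center2 (comm a b))).
  - intro b. rewrite comm_gone_l. apply center2_central, central_gone.
  - intros a1 a2 H1 H2 b. rewrite comm_gmul_l. apply center2_gmul, H2.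
    apply center2_conj, H1.
  - intros a Ha b. rewrite comm_ginv_l. apply center2_conj, center2_ginv, Ha.
  - apply center2_comm_generator.
Qed.

Lemma central_comm3 a b c : central (comm (comm a b) c).
Proof. apply center2_comm. Qed.

Ltac add_central_comm3 :=
  repeat match goal with
  | |- context [comm (comm ?a ?b) ?c] =>
      lazymatch goal with
      | _ : central (comm (comm a b) c) |- _ => fail
      | _ => pose proof (central_comm3 a b c)
      end
  end.

Ltac class3_eq := add_central_comm3; group_eq.

Lemma comm_gmul_l_center2 p q g : center2 p ->
  comm (gmul p q) g = gmul (comm p g) (comm q g).
Proof. intro Hp. rewrite comm_gmul_l, conj_central by apply Hp. reflexivity. Qed.

Lemma comm3_gmul_l a1 a2 b c :
  comm (comm (gmul a1 a2) b) c = gmul (comm (comm a1 b) c) (comm (comm a2 b) c).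
Proof.
  rewrite comm_gmul_l, conj_comm, !comm_gmul_l_center2
    by auto using center2_comm, center2_gmul, center2_central, central_comm3.
  rewrite (commute_comm_gone _ (comm (comm a1 b) a2) c) by apply central_comm3.
  class3_eq.
Qed.

Lemma comm3_gmul_m a b1 b2 c :
  comm (comm a (gmul b1 b2)) c = gmul (comm (comm a b1) c) (comm (comm a b2) c).
Proof.
  rewrite comm_gmul_r, conj_comm, !comm_gmul_l_center2
    by auto using center2_comm, center2_gmul, center2_central, central_comm3.
  rewrite (commute_comm_gone _ (comm (comm a b1) b2) c) by apply central_comm3.
  class3_eq.
Qed.

Lemma comm3_gmul_r a b c1 c2 :
  comm (comm a b) (gmul c1 c2) = gmul (comm (comm a b) c1) (comm (comm a b) c2).
Proof. rewrite comm_gmul_r, conj_central by apply central_comm3. class3_eq. Qed.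

Ltac expand_comm3 :=
  repeat first [rewrite comm3_gmul_l | rewrite comm3_gmul_m | rewrite comm3_gmul_r].

Ltac expand_comm3_in H :=
  repeat first
    [rewrite comm3_gmul_l in H | rewrite comm3_gmul_m in H | rewrite comm3_gmul_r in H].

Lemma engel2_generators x z : In x S -> In z S -> comm (comm x z) x = gone.
Proof.
  intros Hx Hz.
  apply (small_subset_engel2 [x; z]); [incl_S | simpl; lia | |];
    apply gen_base; simpl; auto.
Qed.

Lemma comm3_generators_antisym x y z : In x S -> In y S -> In z S ->
  gmul (comm (comm x z) y) (comm (comm y z) x) = gone.
Proof.
  intros Hx Hy Hz.
  assert (H : comm (comm (gmul x y) z) (gmul x y) = gone).
  { apply (small_subset_engel2 [x; y; z]); [incl_S | simpl; lia | |];
      repeat apply gen_mul; apply gen_base; simpl; auto. }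
  expand_comm3_in H. rewrite !engel2_generators in H by assumption.
  rewrite <- H. class3_eq.
Qed.

Lemma comm3_antisym a b c : gmul (comm (comm a b) c) (comm (comm c b) a) = gone.
Proof.
  revert a. apply hom_trivial_on_generators.
  { intros; cbv beta; expand_comm3; class3_eq. }
  intros x Hx. revert c. apply hom_trivial_on_generators.
  { intros; cbv beta; expand_comm3; class3_eq. }
  intros y Hy. revert b. apply hom_trivial_on_generators.
  { intros; cbv beta; expand_comm3; class3_eq. }
  intros z Hz. apply comm3_generators_antisym; assumption.
Qed.

Lemma engel2 a b : comm (comm a b) a = gone.
Proof.
  revert a. apply hom_trivial_on_generators.
  { intros a1 a2; cbv beta. expand_comm3.
    transitivity (gmul (comm (comm a1 b) a1) (gmul (comm (comm a2 b) a2)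
      (gmul (comm (comm a1 b) a2) (comm (comm a2 b) a1)))); [class3_eq|].
    rewrite (comm3_antisym a1 b a2). group_eq. }
  intros x Hx. revert b. apply hom_trivial_on_generators.
  { intros; cbv beta; expand_comm3; class3_eq. }
  intros z Hz. apply engel2_generators; assumption.
Qed.

Lemma cube_gmul a b : cube a = gone -> cube b = gone -> cube (gmul a b) = gone.
Proof.
  intros Ha Hb.
  assert (Cb : commute (comm b a) b) by apply comm_gone_commute, engel2.
  assert (Ca : commute (comm b a) a).
  { replace (comm b a) with (ginv (comm a b)) by (unfold comm; group_eq).
    apply commute_ginv_l, comm_gone_commute, engel2. }
  assert (Hc : cube (comm b a) = gone).
  { assert (E : cube (gmul b (comm b a)) = gone).
    { replace (gmul b (comm b a)) with (conj b a) by (unfold conj, comm; group_eq).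
      rewrite cube_conj, Hb. unfold conj; group_eq. }
    rewrite cube_gmul_commute, Hb, gmul_1l in E by (apply commute_sym, Cb).
    exact E. }
  rewrite cube_gmul_comm, Ha, Hb, Hc by assumption. group_eq.
Qed.

End Generated.

Theorem lemma6p5 (G : Group) (S : list G)
  (hgen : forall g : G, generated (fun x => In x S) g)
  (h4 : forall T : list G, incl T S -> length T <= 4 ->
        has_exponent3 (generated (fun x => In x T))) :
  forall g : G, cube g = gone.
Proof.
  apply (generators_ind G S hgen).
  - unfold cube; rewrite !gmul_1l; reflexivity.
  - apply (cube_gmul G S hgen h4).
  - intros a Ha. rewrite cube_ginv, Ha. apply ginv_gone.
  - intros s Hs. apply (h4 [s]); [intros t [<-|[]]; exact Hs | simpl; lia |].
    apply gen_base; simpl; auto.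
Qed.
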